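(* Let $(A,\circ,\cap,\sqcup)$ be a right normal band with intersection and override, and define $a\diamond b=a\circ(b\sqcup a)$. If $F$ is a filter of $(A,\circ)$ such that $a\sqcup b\in F$ implies $a\in F$ or $b\in F$ (a prime filter), then $F$ is weakly prime: whenever $a\in F$ and $b\in A$, either $b\in F$ or $a\cap(a\diamond b)\in F$.
   Context: A right normal band with intersection and override $(A,\circ,\cap,\sqcup)$: $(A,\circ)$ a semigroup with $x\circ x=x$, $(x\circ y)\circ z=(y\circ x)\circ z$; $(A,\cap)$ a semilattice; $(x\cap y)\circ x=x\cap y$; $x\circ(y\cap z)=(x\circ y)\cap z$; $s\circ(s\sqcup t)=s$; $((s\sqcup t)\cap t)\sqcup s=s\sqcup t$; $(s\sqcup t)\circ u=(s\circ u)\sqcup(t\circ u)$. Define $f\lesssim g$ iff $g\circ f=f$. A filter of $(A,\circ)$ is a non-empty $F\subseteq A$ closed under $\circ$ with $a\in F$, $a\lesssim b\Rightarrow b\in F$. *)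

Record RNBIO (A : Type) (comp cap ovr : A -> A -> A) : Prop := {
  comp_assoc : forall x y z, comp (comp x y) z = comp x (comp y z);
  comp_idem : forall x, comp x x = x;
  comp_rnormal : forall x y z, comp (comp x y) z = comp (comp y x) z;
  cap_assoc : forall x y z, cap (cap x y) z = cap x (cap y z);
  cap_comm : forall x y, cap x y = cap y x;
  cap_idem : forall x, cap x x = x;
  ax_cap_comp : forall x y, comp (cap x y) x = cap x y;
  ax_comp_cap : forall x y z, comp x (cap y z) = cap (comp x y) z;
  ax_ovr1 : forall s t, comp s (ovr s t) = s;
  ax_ovr2 : forall s t, ovr (cap (ovr s t) t) s = ovr s t;
  ax_ovr3 : forall s t u, comp (ovr s t) u = ovr (comp s u) (comp t u)
}.

Definition lesim {A : Type} (comp : A -> A -> A) (f g : A) : Prop := comp g f = f.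

Definition is_filter {A : Type} (comp : A -> A -> A) (F : A -> Prop) : Prop :=
  (exists a, F a) /\
  (forall a b, F a -> F b -> F (comp a b)) /\
  (forall a b, F a -> lesim comp a b -> F b).

Definition diamond {A : Type} (comp ovr : A -> A -> A) (a b : A) : A :=
  comp a (ovr b a).

(* In a prime filter F containing a, the element b ⊔ a lies in F, since a ≲ b ⊔ a.
   The axiom b ⊔ a = ((b ⊔ a) ∩ a) ⊔ b and primality then give b ∈ F or
   (b ⊔ a) ∩ a ∈ F; in the latter case closure under ∘ yields
   a ∘ ((b ⊔ a) ∩ a) = (a ◇ b) ∩ a ∈ F. *)
From Stdlib Require Import Setoid.

Arguments comp_assoc {A comp cap ovr}.
Arguments comp_idem {A comp cap ovr}.
Arguments comp_rnormal {A comp cap ovr}.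
Arguments cap_comm {A comp cap ovr}.
Arguments cap_idem {A comp cap ovr}.
Arguments ax_comp_cap {A comp cap ovr}.
Arguments ax_ovr1 {A comp cap ovr}.
Arguments ax_ovr2 {A comp cap ovr}.
Arguments ax_ovr3 {A comp cap ovr}.

Section Override.

Variables (A : Type) (comp cap ovr : A -> A -> A).
Hypothesis HA : RNBIO A comp cap ovr.

Lemma lesim_ovr_l (s t : A) : lesim comp s (ovr s t).
Proof.
  unfold lesim.
  rewrite <- (ax_ovr1 HA s t) at 2.
  rewrite <- (comp_assoc HA), (comp_rnormal HA), (comp_assoc HA), (comp_idem HA).
  apply (ax_ovr1 HA).
Qed.

Lemma lesim_ovr_r (s t : A) : lesim comp t (ovr s t).
Proof.
  unfold lesim.
  pose proof (lesim_ovr_l t s) as Hts; unfold lesim in Hts.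
  rewrite (ax_ovr3 HA), (comp_idem HA) in Hts |- *.
  (* Since t ⊔ (s ∘ t) = t, the second override axiom at (t, s ∘ t) collapses to (s ∘ t) ⊔ t = t. *)
  pose proof (ax_ovr2 HA t (comp s t)) as H.
  rewrite Hts, (cap_comm HA), <- (ax_comp_cap HA), (cap_idem HA) in H.
  exact H.
Qed.

Lemma comp_cap_ovr (a b : A) :
  comp a (cap (ovr b a) a) = cap a (diamond comp ovr a b).
Proof.
  unfold diamond.
  rewrite (ax_comp_cap HA), (cap_comm HA).
  reflexivity.
Qed.

End Override.

Lemma prime_filter_ovr (A : Type) (comp cap ovr : A -> A -> A)
  (HA : RNBIO A comp cap ovr) (F : A -> Prop)
  (Hprime : forall a b, F (ovr a b) -> F a \/ F b) (s t : A) :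
  F (ovr s t) -> F s \/ F (cap (ovr s t) t).
Proof.
  intros Fst.
  rewrite <- (ax_ovr2 HA s t) in Fst.
  destruct (Hprime _ _ Fst) as [H | H]; [right | left]; exact H.
Qed.

Theorem proposition3p18 (A : Type) (comp cap ovr : A -> A -> A)
  (HA : RNBIO A comp cap ovr) (F : A -> Prop)
  (HF : is_filter comp F)
  (Hprime : forall a b, F (ovr a b) -> F a \/ F b) :
  forall a b, F a -> F b \/ F (cap a (diamond comp ovr a b)).
Proof.
  intros a b Fa.
  destruct HF as [_ [Fcomp Fup]].
  assert (Fba : F (ovr b a)) by exact (Fup a _ Fa (lesim_ovr_r A comp cap ovr HA b a)).
  destruct (prime_filter_ovr A comp cap ovr HA F Hprime b a Fba) as [Fb | Fcap].
  - left; exact Fb.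
  - right; rewrite <- (comp_cap_ovr A comp cap ovr HA).
    exact (Fcomp _ _ Fa Fcap).
Qed.
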